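(* Let $V$ be a set with $\#V=\aleph_0$, let $k:V\times V\to\mathbb{C}$ be a positive definite function, and let $\mathscr{H}=\mathscr{H}(k)$ be the corresponding reproducing kernel Hilbert space. Assume $\delta_x\in\mathscr{H}$ for all $x\in V$. Then there are closable operators $T:\mathscr{H}\to\ell^2(V)$ with domain $\mathrm{span}\{k_x:x\in V\}$ and $S:\ell^2(V)\to\mathscr{H}$ with domain $\mathrm{span}\{\delta_x:x\in V\}$ such that $T\subseteq S^*$, $S\subseteq T^*$, and $$Tk_x=\delta_x,\qquad S\delta_x=\delta_x\qquad\text{for all }x\in V.$$
   Context: $\delta_x(y)=1$ if $y=x$ and $0$ otherwise. A function $k:V\times V\to\mathbb{C}$ is positive definite if $\sum_{x\in F}\sum_{y\in F}k(x,y)\overline{c_x}c_y\ge 0$ for every finite $F\subset V$ and all $\{c_x\}\subset\mathbb{C}$. For $x\in V$ let $k_x:=k(\cdot,x)$. The RKHS $\mathscr{H}(k)$ is the Hilbert completion of $\mathrm{span}\{k_x\}$ with respect to $\langle\sum_x c_xk_x,\sum_y d_yk_y\rangle_{\mathscr{H}}=\sum\sum\overline{c_x}d_yk(x,y)$ (modulo null vectors); it is a Hilbert space of functions on $V$ with $\langle k_x,\varphi\rangle_{\mathscr{H}}=\varphi(x)$ for all $x\in V$, $\varphi\in\mathscr{H}$. *)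

From HB Require Import structures.
From mathcomp Require Import all_boot all_order all_algebra.
From mathcomp Require Import complex.
From mathcomp Require Import boolp classical_sets cardinality reals.
Set Implicit Arguments. Unset Strict Implicit. Unset Printing Implicit Defensive.
Import Order.TTheory GRing.Theory Num.Theory.
Local Open Scope ring_scope.
Local Open Scope classical_set_scope.

Section RKHS.
Variables (R : realType) (V : choiceType).
Local Notation C := R[i].

Definition cconv (u : nat -> C) (z : C) : Prop :=
  forall e : C, 0 < e -> exists N : nat, forall n : nat, (N <= n)%N -> `|u n - z| < e.

Definition pos_def (k : V -> V -> C) : Prop :=
  forall (F : seq V) (c : V -> C), uniq F ->
    0 <= \sum_(x <- F) \sum_(y <- F) k x y * (c x)^* * c y.

Definition delta (x : V) : V -> C := fun y => (y == x)%:R.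

(* finite linear combinations, encoded as lists of (point, coefficient) *)
Definition kfun (k : V -> V -> C) (c : seq (V * C)) : V -> C :=
  fun y => \sum_(p <- c) p.2 * k y p.1.
Definition dfun (c : seq (V * C)) : V -> C :=
  fun y => \sum_(p <- c) p.2 * delta p.1 y.
Definition kform (k : V -> V -> C) (c d : seq (V * C)) : C :=
  \sum_(p <- c) \sum_(q <- d) (p.2)^* * q.2 * k p.1 q.1.
Definition cdiff (c d : seq (V * C)) : seq (V * C) :=
  c ++ [seq (q.1, - q.2) | q <- d].

(* A sequence of finite combinations that is Cauchy for the pre-inner product
   and converges pointwise to f : the completion realised as functions on V. *)
Definition kapprox (k : V -> V -> C) (c : nat -> seq (V * C)) (f : V -> C) : Prop :=
  (forall e : C, 0 < e -> exists N : nat, forall m n : nat, (N <= m)%N -> (N <= n)%N ->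
      `|kform k (cdiff (c m) (c n)) (cdiff (c m) (c n))| < e)
  /\ (forall y : V, cconv (fun n => kfun k (c n) y) (f y)).

Definition inH (k : V -> V -> C) (f : V -> C) : Prop := exists c, kapprox k c f.
Definition Hip (k : V -> V -> C) (f g : V -> C) : C :=
  xget 0 [set z | exists c d, [/\ kapprox k c f, kapprox k d g &
                                 cconv (fun n => kform k (c n) (d n)) z]].

(* l^2(V) and its inner product (unconditional sums over finite subsets) *)
Definition inl2 (f : V -> C) : Prop :=
  exists M : C, forall F : seq V, uniq F -> \sum_(x <- F) `|f x| ^+ 2 <= M.
Definition l2ip (f g : V -> C) : C :=
  xget 0 [set z | forall e : C, 0 < e -> exists F0 : seq V, forall F : seq V,
            uniq F -> {subset F0 <= F} -> `|\sum_(x <- F) (f x)^* * g x - z| < e].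

Definition span_k (k : V -> V -> C) : set (V -> C) := [set f | exists c, f = kfun k c].
Definition span_delta : set (V -> C) := [set f | exists c, f = dfun c].

(* generic notions for operators between inner-product spaces of functions,
   a space being given by its carrier mem and inner product ip *)
Definition fsub (f g : V -> C) : V -> C := fun y => f y - g y.

Definition nconv (ip : (V -> C) -> (V -> C) -> C) (u : nat -> V -> C) (f : V -> C) :=
  cconv (fun n => ip (fsub (u n) f) (fsub (u n) f)) 0.

Definition linear_on (D : set (V -> C)) (A : (V -> C) -> (V -> C)) : Prop :=
  forall (a : C) (f g : V -> C), D f -> D g ->
    D (fun y => a * f y + g y) /\ A (fun y => a * f y + g y) = (fun y => a * A f y + A g y).

Definition graph_closure (memX memY : set (V -> C)) (ipX ipY : (V -> C) -> (V -> C) -> C)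
    (D : set (V -> C)) (A : (V -> C) -> (V -> C)) (u w : V -> C) : Prop :=
  [/\ memX u, memY w & exists un : nat -> V -> C,
      [/\ forall n, D (un n), nconv ipX un u & nconv ipY (fun n => A (un n)) w]].

(* closable: the closure of the graph is again the graph of an operator *)
Definition closable memX memY ipX ipY D A : Prop :=
  forall u w1 w2, graph_closure memX memY ipX ipY D A u w1 ->
                  graph_closure memX memY ipX ipY D A u w2 -> w1 = w2.

Definition adj_graph (memX memY : set (V -> C)) (ipX ipY : (V -> C) -> (V -> C) -> C)
    (D : set (V -> C)) (A : (V -> C) -> (V -> C)) (y x : V -> C) : Prop :=
  [/\ memY y, memX x & forall v, D v -> ipY (A v) y = ipX v x].

(* B (domain DB) is contained in A^*, i.e. graph B is a subset of graph A^* *)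
Definition sub_adj memX memY ipX ipY D A (DB : set (V -> C)) (B : (V -> C) -> (V -> C)) :=
  forall y, DB y -> adj_graph memX memY ipX ipY D A y (B y).

End RKHS.

(* [T] sends a finite combination [sum_x c_x k_x] to [sum_x c_x delta_x] and [S]
   is the inclusion of the finitely supported functions into [H].  Since
   [delta_y] lies in [H], the reproducing property gives
   [<delta_y, sum_x c_x k_x>_H = sum_x c_x delta_x(y)]: this makes [T] well
   defined and, summed against a second combination, yields
   [<T f, g>_l2 = <f, S g>_H], i.e. [T <= S^*] and [S <= T^*].  Closability
   follows from the continuity of point evaluations: [f(y) = <k_y, f>_H] on
   [H], [(T f)(y) = <delta_y, f>_H], and coordinates on [l^2], so a limit
   point of either graph is determined pointwise by its first component.
   [H] is realised as pointwise limits of Cauchy sequences of combinations,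
   so each property of its inner product is obtained as a limit of the same
   property of the kernel form on combinations, with Cauchy-Schwarz as the
   main estimate. *)

From Pilot Require Import Defs.
From mathcomp Require Import all_boot all_order all_algebra.
From mathcomp Require Import complex.
From mathcomp Require Import boolp classical_sets cardinality reals.
From mathcomp Require Import ring lra.
Import Order.TTheory GRing.Theory Num.Theory Normc.
Local Open Scope ring_scope.
Local Open Scope classical_set_scope.
Set Implicit Arguments. Unset Strict Implicit. Unset Printing Implicit Defensive.
Local Notation "x %:C" := (x%:C)%C.

Section ComplexModulus.
Variable R : realType.
Implicit Types (z w x : R[i]).

Lemma normr_normc z : `|z| = (normc z)%:C.
Proof. by case: z. Qed.

Lemma normc_ge0 z : 0 <= normc z.
Proof. by rewrite -ler0c -normr_normc. Qed.

Lemma normc_real (r : R) : normc r%:C = `|r|.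
Proof. by rewrite /normc /= expr0n /= addr0 sqrtr_sqr. Qed.

Lemma normc_conj z : normc z^* = normc z.
Proof. by apply: complexI; rewrite -!normr_normc norm_conjC. Qed.

Lemma normcD z w : normc (z + w) <= normc z + normc w.
Proof. by rewrite -lecR rmorphD /= -!normr_normc ler_normD. Qed.

Lemma normcB z w : normc (z - w) = normc (w - z).
Proof. by rewrite -normcN opprB. Qed.

Lemma normc_distD z w x : normc (z - w) <= normc (z - x) + normc (x - w).
Proof. by have := normcD (z - x) (x - w); rewrite addrA subrK. Qed.

Lemma normc_small z : (forall e : R, 0 < e -> normc z < e) -> z = 0.
Proof.
move=> h; apply: eq0_normc; apply/eqP; rewrite eq_le normc_ge0 andbT.
by apply/ler_addgt0Pr => e /h /ltW; rewrite add0r.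
Qed.

Lemma gtc0P (e : R[i]) : 0 < e -> e = (complex.Re e)%:C /\ 0 < complex.Re e.
Proof. by case: e => a b; rewrite ltcE /= => /andP[/eqP -> h]. Qed.

Lemma gec0P (e : R[i]) : 0 <= e -> e = (complex.Re e)%:C /\ 0 <= complex.Re e.
Proof. by case: e => a b; rewrite lecE /= => /andP[/eqP -> h]. Qed.

End ComplexModulus.

Section ComplexSequences.
Variable R : realType.
Local Notation C := R[i].
Implicit Types (u v : nat -> C) (a b : C).

Lemma cconvP u a : cconv u a <->
  forall e : R, 0 < e -> exists N, forall n, (N <= n)%N -> normc (u n - a) < e.
Proof.
split=> h e e0.
  have e0' : (0 : C) < e%:C by rewrite ltcR.
  have [N hN] := h _ e0'.
  by exists N => n /hN; rewrite normr_normc ltcR.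
have [-> e0'] := gtc0P e0.
by have [N hN] := h _ e0'; exists N => n /hN; rewrite normr_normc ltcR.
Qed.

Lemma cconv_uniq u a b : cconv u a -> cconv u b -> a = b.
Proof.
move=> /cconvP ha /cconvP hb; apply/eqP; rewrite -subr_eq0; apply/eqP.
apply: normc_small => e e0.
have [N1 hN1] := ha (e / 2) (divr_gt0 e0 (ltr0Sn _ 1)).
have [N2 hN2] := hb (e / 2) (divr_gt0 e0 (ltr0Sn _ 1)).
have a1 := hN1 (maxn N1 N2) (leq_maxl _ _).
have a2 := hN2 (maxn N1 N2) (leq_maxr _ _).
have := normc_distD a b (u (maxn N1 N2)).
rewrite normcB in a1; lra.
Qed.

Lemma cconv_ext u v a : u =1 v -> cconv u a -> cconv v a.
Proof. by move=> /funext ->. Qed.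

Lemma cconv_cst a : cconv (fun _ => a) a.
Proof. by apply/cconvP => e e0; exists 0%N => n _; rewrite subrr normc0. Qed.

Lemma cconvD u v a b : cconv u a -> cconv v b -> cconv (fun n => u n + v n) (a + b).
Proof.
move=> /cconvP hu /cconvP hv; apply/cconvP => e e0.
have [N1 hN1] := hu (e / 2) (divr_gt0 e0 (ltr0Sn _ 1)).
have [N2 hN2] := hv (e / 2) (divr_gt0 e0 (ltr0Sn _ 1)).
exists (maxn N1 N2) => n hn.
have a1 := hN1 n (leq_trans (leq_maxl _ _) hn).
have a2 := hN2 n (leq_trans (leq_maxr _ _) hn).
have := normcD (u n - a) (v n - b).
have -> : u n - a + (v n - b) = u n + v n - (a + b) by ring.
lra.
Qed.

Lemma cconvMl w u a : cconv u a -> cconv (fun n => w * u n) (w * a).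
Proof.
move=> /cconvP hu; apply/cconvP => e e0.
have w0 : 0 < normc w + 1 by have := normc_ge0 w; lra.
have [N hN] := hu (e / (normc w + 1)) (divr_gt0 e0 w0).
exists N => n /hN; rewrite ltr_pdivlMr // -mulrBr normcM => hn.
have := normc_ge0 w; have := normc_ge0 (u n - a); nra.
Qed.

Lemma cconvB u v a b : cconv u a -> cconv v b -> cconv (fun n => u n - v n) (a - b).
Proof.
move=> hu /(cconvMl (-1)) hv.
by have := cconvD hu hv; rewrite mulN1r; apply: cconv_ext => n; rewrite mulN1r.
Qed.

Lemma cconvJ u a : cconv u a -> cconv (fun n => (u n)^*) a^*.
Proof.
move=> /cconvP hu; apply/cconvP => e /hu [N hN]; exists N => n /hN.
by rewrite -rmorphB normc_conj.
Qed.

Lemma cconv_sum (T : Type) (s : seq T) (f : T -> nat -> C) (l : T -> C) :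
  (forall t, cconv (f t) (l t)) ->
  cconv (fun n => \sum_(t <- s) f t n) (\sum_(t <- s) l t).
Proof.
move=> h; elim: s => [|t s IH].
  by rewrite big_nil; apply: cconv_ext (cconv_cst 0) => n; rewrite big_nil.
by rewrite big_cons; apply: cconv_ext (cconvD (h t) IH) => n; rewrite big_cons.
Qed.

Lemma cconv_norm u a : cconv u a -> cconv (fun n => `|u n|) `|a|.
Proof.
move=> /cconvP hu; apply/cconvP => e /hu [N hN]; exists N => n /hN.
have := ler_dist_dist (u n) a.
rewrite [`|u n|]normr_normc [`|a|]normr_normc -rmorphB !normr_normc lecR normc_real; lra.
Qed.

Lemma cconv_ge0 u a : (forall n, 0 <= u n) -> cconv u a -> 0 <= a.
Proof.
move=> u0 hu; apply/normr_idP; apply: (cconv_uniq (cconv_norm hu)).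
by apply: cconv_ext hu => n; rewrite ger0_norm.
Qed.

Lemma cconv_normc_le u a (b : R) : cconv u a ->
  (exists N, forall n, (N <= n)%N -> normc (u n) <= b) -> normc a <= b.
Proof.
move=> /cconvP hu [N hN]; apply/ler_addgt0Pr => e /hu [N' hN'].
have a1 := hN' (maxn N N') (leq_maxr _ _).
have a2 := hN (maxn N N') (leq_maxl _ _).
have := normcD (u (maxn N N')) (a - u (maxn N N')).
rewrite addrC subrK normcB; lra.
Qed.

Lemma cconv_squeeze0 u v :
  (forall n, 0 <= u n <= v n) -> cconv v 0 -> cconv u 0.
Proof.
move=> huv /cconvP hv; apply/cconvP => e /hv [N hN]; exists N => n /hN.
have /andP[u0 uv] := huv n; rewrite !subr0 => hvn.
have : `|u n| <= `|v n| by rewrite !ger0_norm // (le_trans u0).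
rewrite !normr_normc lecR; lra.
Qed.

End ComplexSequences.

Section RealFacts.
Variable R : realType.

Lemma cauchy_cvg (u : nat -> R) :
  (forall e, 0 < e -> exists N, forall m n, (N <= m)%N -> (N <= n)%N -> `|u m - u n| < e) ->
  exists l, forall e, 0 < e -> exists N, forall n, (N <= n)%N -> `|u n - l| < e.
Proof.
move=> h.
pose A := [set x : R | exists N, forall n, (N <= n)%N -> x <= u n].
have [N1 hN1] := h 1 ltr01.
have A0 : A !=set0.
  exists (u N1 - 1); exists N1 => n hn.
  have := hN1 n N1 hn (leqnn _); rewrite ltr_norml => /andP[a b]; lra.
have Aub : forall x, A x -> x <= u N1 + 1.
  move=> x [N hN].
  have a1 := hN (maxn N N1) (leq_maxl _ _).
  have := hN1 (maxn N N1) N1 (leq_maxr _ _) (leqnn _).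
  rewrite ltr_norml => /andP[a b]; lra.
have hs : has_sup A by split => //; exists (u N1 + 1) => x /Aub.
exists (sup A) => e e0.
have [N hN] := h (e / 2) (divr_gt0 e0 (ltr0Sn _ 1)).
have l1 : u N - e / 2 <= sup A.
  apply: sup_upper_bound => //; exists N => n hn.
  have := hN n N hn (leqnn _); rewrite ltr_norml => /andP[a b]; lra.
have l2 : sup A <= u N + e / 2.
  apply: ge_sup => // x [M hM].
  have a1 := hM (maxn M N) (leq_maxl _ _).
  have := hN (maxn M N) N (leq_maxr _ _) (leqnn _).
  rewrite ltr_norml => /andP[a b]; lra.
exists N => n hn.
have := hN n N hn (leqnn _); rewrite !ltr_norml => /andP[a b].
by apply/andP; split; lra.
Qed.

(* Optimising [t] in [2 x <= t a + K / t] shows that [x] is small when [a] is. *)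
Lemma amgm_small (K e : R) : 0 <= K -> 0 < e -> exists2 d, 0 < d &
  forall x a, a < d -> (forall t, 0 < t -> 2 * x <= t * a + K / t) -> x < e.
Proof.
move=> K0 e0; pose t := 2 * (K + 1) / e.
have t0 : 0 < t by rewrite /t divr_gt0 // mulr_gt0 //; lra.
exists (e / (2 * t)); first by rewrite divr_gt0 // mulr_gt0.
move=> x a ha /(_ t t0) hx.
have hta : t * a < e / 2.
  have -> : e / 2 = t * (e / (2 * t)) by field; rewrite gt_eqF.
  by rewrite ltr_pM2l.
have hKt : K / t < e / 2.
  rewrite ltr_pdivrMr // /t.
  have -> : e / 2 * (2 * (K + 1) / e) = K + 1 by field; rewrite gt_eqF.
  lra.
lra.
Qed.

End RealFacts.

Section KernelForm.
Variables (R : realType) (V : choiceType) (k : V -> V -> R[i]).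
Local Notation C := R[i].
Local Notation comb := (seq (V * C)).
Local Notation kf := (kform k).
Local Notation dfun := (@dfun R V).
Local Notation delta := (@delta R V).

Definition scale_comb (a : C) (c : comb) : comb := [seq (p.1, a * p.2) | p <- c].
Definition opp_comb (c : comb) : comb := [seq (p.1, - p.2) | p <- c].

Lemma kform_catl c1 c2 d : kf (c1 ++ c2) d = kf c1 d + kf c2 d.
Proof. by rewrite /kform big_cat. Qed.

Lemma kform_catr c d1 d2 : kf c (d1 ++ d2) = kf c d1 + kf c d2.
Proof. by rewrite /kform -big_split; apply: eq_bigr => p _; rewrite big_cat. Qed.

Lemma kform_scalel a c d : kf (scale_comb a c) d = a^* * kf c d.
Proof.
rewrite /kform big_map mulr_sumr; apply: eq_bigr => p _; rewrite mulr_sumr.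
by apply: eq_bigr => q _ /=; rewrite rmorphM /= -!mulrA.
Qed.

Lemma kform_scaler a c d : kf c (scale_comb a d) = a * kf c d.
Proof.
rewrite /kform mulr_sumr; apply: eq_bigr => p _; rewrite big_map mulr_sumr.
by apply: eq_bigr => q _ /=; rewrite mulrCA !mulrA.
Qed.

Lemma kform_oppl c d : kf (opp_comb c) d = - kf c d.
Proof.
rewrite /kform big_map -sumrN; apply: eq_bigr => p _; rewrite -sumrN.
by apply: eq_bigr => q _ /=; rewrite rmorphN /= !mulNr.
Qed.

Lemma kform_oppr c d : kf c (opp_comb d) = - kf c d.
Proof.
rewrite /kform -sumrN; apply: eq_bigr => p _; rewrite big_map -sumrN.
by apply: eq_bigr => q _ /=; rewrite mulrN mulNr.
Qed.

Lemma scale_combN1 c : scale_comb (-1) c = opp_comb c.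
Proof. by apply: eq_map => p; rewrite mulN1r. Qed.

Lemma scale_comb_cat a c d : scale_comb a (c ++ d) = scale_comb a c ++ scale_comb a d.
Proof. exact: map_cat. Qed.

Lemma opp_comb_cat c d : opp_comb (c ++ d) = opp_comb c ++ opp_comb d.
Proof. exact: map_cat. Qed.

Lemma cdiffE c d : cdiff c d = c ++ opp_comb d.
Proof. by []. Qed.

Definition kformE := (cdiffE, kform_catl, kform_catr, kform_scalel, kform_scaler,
  kform_oppl, kform_oppr, scale_comb_cat, opp_comb_cat).

Lemma kfun_cat c d y : kfun k (c ++ d) y = kfun k c y + kfun k d y.
Proof. by rewrite /kfun big_cat. Qed.

Lemma kfun_scale a c y : kfun k (scale_comb a c) y = a * kfun k c y.
Proof. by rewrite /kfun big_map mulr_sumr; apply: eq_bigr => p _ /=; rewrite mulrA. Qed.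

Lemma kfun_opp c y : kfun k (opp_comb c) y = - kfun k c y.
Proof. by rewrite /kfun big_map -sumrN; apply: eq_bigr => p _ /=; rewrite mulNr. Qed.

Lemma dfun_cat c d y : dfun (c ++ d) y = dfun c y + dfun d y.
Proof. by rewrite /Defs.dfun big_cat. Qed.

Lemma dfun_scale a c y : dfun (scale_comb a c) y = a * dfun c y.
Proof. by rewrite /Defs.dfun big_map mulr_sumr; apply: eq_bigr => p _ /=; rewrite mulrA. Qed.

Lemma dfun_opp c y : dfun (opp_comb c) y = - dfun c y.
Proof. by rewrite /Defs.dfun big_map -sumrN; apply: eq_bigr => p _ /=; rewrite mulNr. Qed.

Lemma kfun1 x : kfun k [:: (x, 1)] = k^~ x.
Proof. by apply/funext => y; rewrite /kfun big_seq1 mul1r. Qed.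

Lemma dfun1 x : dfun [:: (x, 1)] = delta x.
Proof. by apply/funext => y; rewrite /Defs.dfun big_seq1 mul1r. Qed.

Lemma kform_kfun c d : kf c d = \sum_(p <- c) p.2^* * kfun k d p.1.
Proof.
rewrite /kform; apply: eq_bigr => p _; rewrite /kfun mulr_sumr.
by apply: eq_bigr => q _; rewrite mulrA.
Qed.

Lemma kfun_kform (c : comb) y : kfun k c y = kf [:: (y, 1)] c.
Proof. by rewrite kform_kfun big_seq1 conjC1 mul1r. Qed.

Lemma kform_cdiff0 c : kf (cdiff c c) (cdiff c c) = 0.
Proof. rewrite !kformE; ring. Qed.


Lemma big_pred1_uniq (T : eqType) (s : seq T) y (g : T -> C) :
  uniq s -> y \in s -> \sum_(x <- s | y == x) g x = g y.
Proof.
move=> us ys; rewrite (big_rem y) //= eqxx big1_seq ?addr0 //.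
by move=> x /andP[/eqP <-]; rewrite mem_rem_uniqF.
Qed.

Lemma big_group_fst (f : V * C -> C) (c : comb) :
  \sum_(p <- c) f p = \sum_(x <- undup (map fst c)) \sum_(p <- c | p.1 == x) f p.
Proof.
under [RHS]eq_bigr do rewrite big_mkcond.
rewrite [RHS]exchange_big /=; apply: eq_big_seq => p pc.
by rewrite -big_mkcond big_pred1_uniq ?undup_uniq // mem_undup map_f.
Qed.

(* Merging the coefficients of repeated points turns [kform k c c] into the
   quadratic form of [pos_def] on the distinct points of [c]. *)
Lemma kform_ge0 : pos_def k -> forall c, 0 <= kf c c.
Proof.
move=> hk c; set F := undup (map fst c).
pose cf x := \sum_(p <- c | p.1 == x) p.2.
suff -> : kf c c = \sum_(x <- F) \sum_(y <- F) k x y * (cf x)^* * cf y.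
  exact: hk (undup_uniq _).
rewrite /kform big_group_fst; apply: eq_bigr => x _.
under [RHS]eq_bigr => y _ do rewrite /cf rmorph_sum -mulrA mulr_suml mulr_sumr.
rewrite [RHS]exchange_big /=; apply: eq_bigr => p /eqP px.
rewrite big_group_fst; apply: eq_bigr => y _.
rewrite !mulr_sumr; apply: eq_bigr => q /eqP qy.
rewrite px qy; ring.
Qed.

End KernelForm.

Section PositiveKernel.
Variables (R : realType) (V : choiceType) (k : V -> V -> R[i]).
Hypothesis hk : pos_def k.
Local Notation C := R[i].
Local Notation kf := (kform k).

(* Polarisation: the forms of [c ++ d] and [c ++ 'i d] are real. *)
Lemma kform_conj c d : kf d c = (kf c d)^*.
Proof.
have real_diag e : (kf e e)^* = kf e e by apply: geC0_conj; apply: kform_ge0.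
have E1 : kf (c ++ d) (c ++ d) = kf c c + kf d d + kf c d + kf d c.
  by rewrite !kformE; ring.
have E2 : kf (c ++ scale_comb 'i d) (c ++ scale_comb 'i d) =
    kf c c + ('i^* * 'i) * kf d d + 'i * kf c d + 'i^* * kf d c.
  by rewrite !kformE; ring.
have := real_diag (c ++ d); have := real_diag (c ++ scale_comb 'i d).
rewrite E1 E2 !rmorphD !rmorphM /= conjCK !real_diag conjCi.
move: (kf c d) (kf d c) => a b h2 h1.
have e1 : a^* + b^* = a + b by move: h1; rewrite -!addrA => /addrI /addrI.
have e2 : - 'i * a^* + 'i * b^* = 'i * a + - 'i * b.
  by move: h2; rewrite -!addrA => /addrI; rewrite (mulrC 'i (- 'i)) => /addrI.
have e3 : a^* - b^* = - a + b.
  have := congr1 ( *%R 'i) e2 => /=.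
  rewrite !mulrDr !mulrA !mulrN !mulNr mulCii !mulN1r !opprK => ->.
  by rewrite addrC.
have two0 : (2%:R : C) != 0 by rewrite pnatr_eq0.
apply: (mulfI two0).
have -> : 2%:R * b = (a + b) + (- a + b) by ring.
by rewrite -e1 -e3; ring.
Qed.

Definition knorm2 c : R := complex.Re (kf c c).

Lemma kform_diag c : kf c c = (knorm2 c)%:C.
Proof. exact: (gec0P (kform_ge0 hk c)).1. Qed.

Lemma knorm2_ge0 c : 0 <= knorm2 c.
Proof. exact: (gec0P (kform_ge0 hk c)).2. Qed.

Lemma knorm2E c : knorm2 c = normc (kf c c).
Proof. by rewrite kform_diag normc_real ger0_norm // knorm2_ge0. Qed.

Lemma knorm2_eq c d : kf c c = kf d d -> knorm2 c = knorm2 d.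
Proof. by rewrite /knorm2 => ->. Qed.

Lemma normc_kform_sym c d : normc (kf d c) = normc (kf c d).
Proof. by rewrite kform_conj normc_conj. Qed.

Lemma kform_CauchySchwarz c d : 2 * normc (kf c d) <= knorm2 c + knorm2 d.
Proof.
have [->|cd0] := eqVneq (kf c d) 0.
  by rewrite normc0 mulr0 addr_ge0 // knorm2_ge0.
(* rotate [d] by the phase [w] that makes [kf c (w d)] real and nonnegative *)
set w : C := `|kf c d| / kf c d.
have hw : w * kf c d = `|kf c d| by rewrite /w mulfVK.
have hw2 : w^* * w = 1.
  by rewrite -normCKC /w normrM normfV normr_id mulfV ?expr1n // normr_eq0.
clearbody w.
have := kform_ge0 hk (c ++ opp_comb (scale_comb w d)).
have -> : kf (c ++ opp_comb (scale_comb w d)) (c ++ opp_comb (scale_comb w d)) =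
    kf c c + (w^* * w) * kf d d - w * kf c d - (w * kf c d)^*.
  by rewrite !kformE (kform_conj c d) rmorphM; ring.
rewrite hw2 hw conj_normC mul1r !kform_diag normr_normc.
rewrite -rmorphD -!rmorphB ler0c.
lra.
Qed.

Lemma knorm2_scale a c : knorm2 (scale_comb a c) = normc a ^+ 2 * knorm2 c.
Proof.
apply: complexI; rewrite rmorphM rmorphXn /= -!kform_diag !kformE -normr_normc normCKC.
by rewrite mulrA.
Qed.

Lemma kform_CauchySchwarz_scaled c d t :
  0 < t -> 2 * normc (kf c d) <= t * knorm2 c + knorm2 d / t.
Proof.
move=> t0; have := kform_CauchySchwarz (scale_comb t%:C c) d.
have tJ : (t%:C)^* = t%:C by apply/conj_Creal/complex_realP; exists t.
rewrite knorm2_scale kform_scalel tJ normcM normc_real.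
rewrite (ger0_norm (ltW t0)) => h.
have hu : knorm2 d = (knorm2 d / t) * t by rewrite mulfVK ?gt_eqF.
move: h; rewrite [X in _ <= _ + X]hu; move: (knorm2 d / t) => u h.
have := knorm2_ge0 c; have := normc_ge0 (kf c d); nra.
Qed.

Lemma knorm2_opp c : knorm2 (opp_comb c) = knorm2 c.
Proof. by rewrite /knorm2 !kformE opprK. Qed.

Lemma knorm2_cat c d : knorm2 (c ++ d) <= 2 * knorm2 c + 2 * knorm2 d.
Proof.
have hcd : knorm2 (c ++ d) + knorm2 (c ++ opp_comb d) = 2 * knorm2 c + 2 * knorm2 d.
  apply: complexI; rewrite !rmorphD !rmorphM rmorph_nat /= -!kform_diag !kformE; ring.
by have := knorm2_ge0 (c ++ opp_comb d); lra.
Qed.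

End PositiveKernel.

Section ReproducingKernelSpace.
Variables (R : realType) (V : choiceType) (k : V -> V -> R[i]).
Hypothesis hk : pos_def k.
Local Notation C := R[i].
Local Notation comb := (seq (V * C)).
Local Notation kf := (kform k).
Local Notation knorm2 := (knorm2 k).
Local Notation fsub := (@fsub R V).

Definition kcauchy (c : nat -> comb) := forall e : R, 0 < e -> exists N,
  forall m n, (N <= m)%N -> (N <= n)%N -> knorm2 (cdiff (c m) (c n)) < e.

Lemma kapproxP c f : kapprox k c f <->
  kcauchy c /\ forall y, cconv (fun n => kfun k (c n) y) (f y).
Proof.
have normE x : `|kf x x| = (knorm2 x)%:C by rewrite normr_normc -knorm2E.
split=> -[hc hp]; split=> // e e0.
  have e0' : (0 : C) < e%:C by rewrite ltcR.
  have [N hN] := hc _ e0'; exists N => m n hm hn.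
  by have := hN m n hm hn; rewrite normE ltcR.
have [-> e0'] := gtc0P e0.
have [N hN] := hc _ e0'; exists N => m n hm hn.
by rewrite normE ltcR; apply: hN.
Qed.

Lemma kapprox_cauchy c f : kapprox k c f -> kcauchy c.
Proof. by case/kapproxP. Qed.

Lemma kapprox_pointwise c f y : kapprox k c f -> cconv (fun n => kfun k (c n) y) (f y).
Proof. by case/kapproxP => _; apply. Qed.

Lemma kcauchy_bounded c : kcauchy c -> exists K N, 0 <= K /\
  forall n, (N <= n)%N -> knorm2 (c n) <= K.
Proof.
move=> hc; have [N hN] := hc 1 ltr01.
exists (2 + 2 * knorm2 (c N)), N; split; first by have := knorm2_ge0 hk (c N); lra.
move=> n hn.
have -> : knorm2 (c n) = knorm2 (cdiff (c n) (c N) ++ c N).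
  by apply: knorm2_eq; rewrite !kformE; ring.
have := knorm2_cat hk (cdiff (c n) (c N)) (c N).
have := hN n N hn (leqnn _); lra.
Qed.

Lemma kform_small (K e : R) : 0 <= K -> 0 < e -> exists2 d, 0 < d &
  forall u v, knorm2 u < d -> knorm2 v <= K -> normc (kf u v) < e /\ normc (kf v u) < e.
Proof.
move=> K0 e0; have [d d0 hd] := amgm_small K0 e0.
exists d => // u v hu hv; rewrite (normc_kform_sym hk u v).
suff h : normc (kf u v) < e by split.
apply: (hd _ _ hu) => t t0; apply: le_trans (kform_CauchySchwarz_scaled hk u v t0) _.
by rewrite lerD2l ler_pM2r ?invr_gt0.
Qed.

Lemma kcauchy_cdiff c c' : kcauchy c -> kcauchy c' ->
  kcauchy (fun n => cdiff (c n) (c' n)).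
Proof.
move=> h1 h2 e e0.
have [N1 hN1] := h1 (e / 4) (divr_gt0 e0 (ltr0Sn _ 3)).
have [N2 hN2] := h2 (e / 4) (divr_gt0 e0 (ltr0Sn _ 3)).
exists (maxn N1 N2) => m n hm hn.
have a1 := hN1 m n (leq_trans (leq_maxl _ _) hm) (leq_trans (leq_maxl _ _) hn).
have a2 := hN2 m n (leq_trans (leq_maxr _ _) hm) (leq_trans (leq_maxr _ _) hn).
have -> : knorm2 (cdiff (cdiff (c m) (c' m)) (cdiff (c n) (c' n))) =
    knorm2 (cdiff (c m) (c n) ++ opp_comb (cdiff (c' m) (c' n))).
  by apply: knorm2_eq; rewrite !kformE; ring.
have := knorm2_cat hk (cdiff (c m) (c n)) (opp_comb (cdiff (c' m) (c' n))).
rewrite knorm2_opp; lra.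
Qed.

(* Pair [e n] with a fixed late term [e N]: [kf (e N) (e n)] tends to 0 by the
   pointwise hypothesis and Cauchy-Schwarz controls [kf (e n - e N) (e n)]. *)
Lemma knorm2_cvg0 (e : nat -> comb) : kcauchy e ->
  (forall y, cconv (fun n => kfun k (e n) y) 0) ->
  forall eps, 0 < eps -> exists N, forall n, (N <= n)%N -> knorm2 (e n) < eps.
Proof.
move=> hc hp eps e0.
have [N hN] := hc (eps / 2) (divr_gt0 e0 (ltr0Sn _ 1)).
have hB : cconv (fun n => kf (e N) (e n)) 0.
  have := cconv_sum (e N) (fun p => cconvMl p.2^* (hp p.1)).
  under eq_bigr do rewrite mulr0; rewrite big1 //.
  by apply: cconv_ext => n; rewrite kform_kfun.
have [N' hN'] := proj1 (cconvP _ _) hB (eps / 4) (divr_gt0 e0 (ltr0Sn _ 3)).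
exists (maxn N N') => n hn.
have a1 := hN n N (leq_trans (leq_maxl _ _) hn) (leqnn _).
have := hN' n (leq_trans (leq_maxr _ _) hn); rewrite subr0 => a2.
have eq1 : kf (e n) (e n) = kf (cdiff (e n) (e N)) (e n) + kf (e N) (e n).
  by rewrite !kformE; ring.
have := normcD (kf (cdiff (e n) (e N)) (e n)) (kf (e N) (e n)).
rewrite -eq1 -(knorm2E hk) => a3.
have := kform_CauchySchwarz hk (cdiff (e n) (e N)) (e n).
lra.
Qed.

Lemma kapprox_cdiff_cvg0 c c' f : kapprox k c f -> kapprox k c' f ->
  forall eps, 0 < eps -> exists N, forall n, (N <= n)%N ->
    knorm2 (cdiff (c n) (c' n)) < eps.
Proof.
move=> /kapproxP [h1 p1] /kapproxP [h2 p2].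
apply: knorm2_cvg0; first exact: kcauchy_cdiff.
move=> y; have := cconvB (p1 y) (p2 y); rewrite subrr.
by apply: cconv_ext => n; rewrite cdiffE kfun_cat kfun_opp.
Qed.

Lemma kform_cvg_indep c c' d d' f g : kapprox k c f -> kapprox k c' f ->
  kapprox k d g -> kapprox k d' g ->
  cconv (fun n => kf (c n) (d n) - kf (c' n) (d' n)) 0.
Proof.
move=> hc hc' hd hd'; apply/cconvP => eps e0.
have [K1 [N1 [K10 hK1]]] := kcauchy_bounded (kapprox_cauchy hd).
have [K2 [N2 [K20 hK2]]] := kcauchy_bounded (kapprox_cauchy hc').
have [d1 d10 hd1] := kform_small K10 (divr_gt0 e0 (ltr0Sn _ 1)).
have [d2 d20 hd2] := kform_small K20 (divr_gt0 e0 (ltr0Sn _ 1)).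
have [N3 hN3] := kapprox_cdiff_cvg0 hc hc' d10.
have [N4 hN4] := kapprox_cdiff_cvg0 hd hd' d20.
exists (maxn (maxn N1 N2) (maxn N3 N4)) => n hn.
have hn1 : (N1 <= n)%N by apply: leq_trans hn; rewrite !leq_max leqnn.
have hn2 : (N2 <= n)%N by apply: leq_trans hn; rewrite !leq_max leqnn !orbT.
have hn3 : (N3 <= n)%N by apply: leq_trans hn; rewrite !leq_max leqnn !orbT.
have hn4 : (N4 <= n)%N by apply: leq_trans hn; rewrite !leq_max leqnn !orbT.
have [a1 _] := hd1 _ _ (hN3 n hn3) (hK1 n hn1).
have [_ a2] := hd2 _ _ (hN4 n hn4) (hK2 n hn2).
have -> : kf (c n) (d n) - kf (c' n) (d' n) - 0 =
    kf (cdiff (c n) (c' n)) (d n) + kf (c' n) (cdiff (d n) (d' n)).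
  by rewrite !kformE; ring.
have := normcD (kf (cdiff (c n) (c' n)) (d n)) (kf (c' n) (cdiff (d n) (d' n))).
lra.
Qed.

Lemma Hip_cvg c d f g z : kapprox k c f -> kapprox k d g ->
  cconv (fun n => kf (c n) (d n)) z -> Hip k f g = z.
Proof.
move=> hc hd hz; rewrite /Hip; set P := [set z | _].
have Pz : P z by exists c, d.
have [c' [d' [hc' hd' hz']]] := xgetPex 0 (ex_intro _ z Pz).
have /(cconv_uniq (kform_cvg_indep hc hc' hd hd')) /eqP := cconvB hz hz'.
by rewrite eq_sym subr_eq0 => /eqP.
Qed.

Lemma Hip_diag_cvg c f : kapprox k c f -> cconv (fun n => kf (c n) (c n)) (Hip k f f).
Proof.
move=> hcf; have hc := kapprox_cauchy hcf.
have [l hl] : exists l, forall e, 0 < e -> exists N, forall n, (N <= n)%N ->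
    `|knorm2 (c n) - l| < e.
  apply: cauchy_cvg => eps e0.
  have [K [N0 [K0 hK]]] := kcauchy_bounded hc.
  have [d d0 hd] := kform_small K0 (divr_gt0 e0 (ltr0Sn _ 1)).
  have [N hN] := hc d d0.
  exists (maxn N0 N) => m n hm hn.
  have hmn := hN m n (leq_trans (leq_maxr _ _) hm) (leq_trans (leq_maxr _ _) hn).
  have [a1 _] := hd _ _ hmn (hK m (leq_trans (leq_maxl _ _) hm)).
  have [_ a2] := hd _ _ hmn (hK n (leq_trans (leq_maxl _ _) hn)).
  have -> : `|knorm2 (c m) - knorm2 (c n)| = normc (kf (c m) (c m) - kf (c n) (c n)).
    by rewrite !(kform_diag hk) -rmorphB normc_real.
  have -> : kf (c m) (c m) - kf (c n) (c n) =
      kf (cdiff (c m) (c n)) (c m) + kf (c n) (cdiff (c m) (c n)).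
    by rewrite !kformE; ring.
  have := normcD (kf (cdiff (c m) (c n)) (c m)) (kf (c n) (cdiff (c m) (c n))).
  lra.
have hl' : cconv (fun n => kf (c n) (c n)) l%:C.
  apply/cconvP => e /hl [N hN]; exists N => n /hN.
  by rewrite (kform_diag hk) -rmorphB normc_real.
by rewrite (Hip_cvg hcf hcf hl').
Qed.

Lemma Hip_ge0 f : inH k f -> 0 <= Hip k f f.
Proof.
by case=> c /Hip_diag_cvg; apply: cconv_ge0 => n; apply: kform_ge0.
Qed.

Lemma kapprox_kfun c : kapprox k (fun _ => c) (kfun k c).
Proof.
apply/kapproxP; split=> [e e0|y]; last exact: cconv_cst.
by exists 0%N => m n _ _; rewrite (knorm2E hk) kform_cdiff0 normc0.
Qed.

Lemma kapprox_lin a c f d g : kapprox k c f -> kapprox k d g ->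
  kapprox k (fun n => scale_comb a (c n) ++ d n) (fun y => a * f y + g y).
Proof.
move=> /kapproxP [h1 p1] /kapproxP [h2 p2]; apply/kapproxP; split; last first.
  move=> y; have := cconvD (cconvMl a (p1 y)) (p2 y).
  by apply: cconv_ext => n; rewrite kfun_cat kfun_scale.
move=> e e0.
have a0 : 0 < 4 * (normc a ^+ 2 + 1) by have := normc_ge0 a; nra.
have [N1 hN1] := h1 _ (divr_gt0 e0 a0).
have [N2 hN2] := h2 (e / 4) (divr_gt0 e0 (ltr0Sn _ 3)).
exists (maxn N1 N2) => m n hm hn.
have b1 := hN1 m n (leq_trans (leq_maxl _ _) hm) (leq_trans (leq_maxl _ _) hn).
have b2 := hN2 m n (leq_trans (leq_maxr _ _) hm) (leq_trans (leq_maxr _ _) hn).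
have -> : knorm2 (cdiff (scale_comb a (c m) ++ d m) (scale_comb a (c n) ++ d n)) =
    knorm2 (scale_comb a (cdiff (c m) (c n)) ++ cdiff (d m) (d n)).
  by apply: knorm2_eq; rewrite !kformE; ring.
have := knorm2_cat hk (scale_comb a (cdiff (c m) (c n))) (cdiff (d m) (d n)).
rewrite knorm2_scale; move: b1; rewrite ltr_pdivlMr // => b1.
have := knorm2_ge0 hk (cdiff (c m) (c n)); have := normc_ge0 a.
nra.
Qed.

Lemma inH_lin a f g : inH k f -> inH k g -> inH k (fun y => a * f y + g y).
Proof. by move=> [c hc] [d hd]; exists (fun n => scale_comb a (c n) ++ d n); apply: kapprox_lin. Qed.

Lemma inH_kfun c : inH k (kfun k c).
Proof. by exists (fun _ => c); apply: kapprox_kfun. Qed.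

Lemma fsubE (f g : V -> C) : fsub f g = (fun y => -1 * g y + f y).
Proof. by apply/funext => y; rewrite /Defs.fsub; ring. Qed.

Lemma inH_fsub f g : inH k f -> inH k g -> inH k (fsub f g).
Proof. by move=> hf hg; rewrite fsubE; apply: inH_lin. Qed.

Lemma Hip_kfun c d : Hip k (kfun k c) (kfun k d) = kf c d.
Proof. exact: Hip_cvg (kapprox_kfun c) (kapprox_kfun d) (cconv_cst _). Qed.

Lemma Hip_kfunl c g : inH k g -> Hip k (kfun k c) g = \sum_(q <- c) q.2^* * g q.1.
Proof.
move=> [d hd]; apply: (Hip_cvg (kapprox_kfun c) hd).
have := cconv_sum c (fun q => cconvMl q.2^* (kapprox_pointwise q.1 hd)).
by apply: cconv_ext => n; rewrite kform_kfun.
Qed.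

Lemma Hip_kfunr c g : inH k g -> Hip k g (kfun k c) = \sum_(q <- c) q.2 * (g q.1)^*.
Proof.
move=> [d hd]; apply: (Hip_cvg hd (kapprox_kfun c)).
have := cconvJ (cconv_sum c (fun q => cconvMl q.2^* (kapprox_pointwise q.1 hd))).
rewrite rmorph_sum (eq_bigr (fun q => q.2 * (g q.1)^*)) => [|q _]; last first.
  by rewrite rmorphM /= conjCK.
by apply: cconv_ext => n; rewrite (kform_conj hk c (d n)) kform_kfun.
Qed.

Lemma Hip_fsub_le f g : inH k f -> inH k g ->
  Hip k (fsub f g) (fsub f g) <= 2 * Hip k f f + 2 * Hip k g g.
Proof.
move=> [c hc] [d hd].
have he : kapprox k (fun n => scale_comb (-1) (d n) ++ c n) (fsub f g).
  by rewrite fsubE; apply: kapprox_lin.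
rewrite -subr_ge0; apply: cconv_ge0 (cconvB (cconvD
  (cconvMl 2 (Hip_diag_cvg hc)) (cconvMl 2 (Hip_diag_cvg hd))) (Hip_diag_cvg he)) => n.
rewrite !(kform_diag hk) !mulr_natl -!rmorphMn -rmorphD -rmorphB ler0c subr_ge0 !mulr2n.
have := knorm2_cat hk (scale_comb (-1) (d n)) (c n).
rewrite scale_combN1 knorm2_opp; lra.
Qed.

Lemma inH_eval_bound f y t : inH k f -> 0 < t ->
  2 * normc (f y) <= t * normc (Hip k f f) + knorm2 [:: (y, 1)] / t.
Proof.
move=> [g hg] t0; apply/ler_addgt0Pr => eps e0.
suff : normc (f y) <= (t * normc (Hip k f f) + knorm2 [:: (y, 1)] / t + eps) / 2.
  by rewrite ler_pdivlMr //; lra.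
apply: (cconv_normc_le (kapprox_pointwise y hg)).
have [N hN] := proj1 (cconvP _ _) (Hip_diag_cvg hg) (eps / t) (divr_gt0 e0 t0).
exists N => n /hN hn.
have hgn : t * knorm2 (g n) <= t * normc (Hip k f f) + eps.
  have -> : eps = t * (eps / t) by rewrite mulrC mulfVK ?gt_eqF.
  rewrite -mulrDr ler_pM2l // (knorm2E hk).
  by have := normc_distD (kf (g n) (g n)) 0 (Hip k f f); rewrite !subr0; lra.
have := kform_CauchySchwarz_scaled hk (g n) [:: (y, 1)] t0.
rewrite kfun_kform (normc_kform_sym hk); lra.
Qed.

Lemma Hip_nconv_pointwise (u : nat -> V -> C) w y : (forall n, inH k (fsub (u n) w)) ->
  nconv (Hip k) u w -> cconv (fun n => u n y) (w y).
Proof.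
move=> hu /cconvP hcv; apply/cconvP => e e0.
have [d d0 hd] := amgm_small (knorm2_ge0 hk [:: (y, 1)]) e0.
have [N hN] := hcv d d0; exists N => n /hN; rewrite subr0 => hn.
by apply: (hd _ _ hn) => t t0; apply: inH_eval_bound.
Qed.

End ReproducingKernelSpace.

Section DeltaInH.
Variables (R : realType) (V : choiceType) (k : V -> V -> R[i]).
Hypotheses (hk : pos_def k) (hdelta : forall x : V, inH k (@delta R V x)).
Local Notation C := R[i].
Local Notation comb := (seq (V * C)).
Local Notation kf := (kform k).
Local Notation knorm2 := (knorm2 k).
Local Notation dfun := (@dfun R V).
Local Notation delta := (@delta R V).

Lemma inH_dfun c : inH k (dfun c).
Proof.
elim: c => [|p c IH].
  have -> : dfun [::] = kfun k [::] by apply/funext => y; rewrite /Defs.dfun /kfun !big_nil.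
  exact: inH_kfun.
have -> : dfun (p :: c) = (fun y => p.2 * delta p.1 y + dfun c y).
  by apply/funext => y; rewrite /Defs.dfun big_cons.
exact: inH_lin.
Qed.

Lemma kform_delta_cvg e y a : kapprox k a (delta y) ->
  cconv (fun n => kf e (a n)) ((dfun e y)^*).
Proof.
move=> ha; have := cconv_sum e (fun p => cconvMl p.2^* (kapprox_pointwise hk p.1 ha)).
have -> : \sum_(p <- e) p.2^* * delta y p.1 = (dfun e y)^*.
  rewrite /Defs.dfun rmorph_sum; apply: eq_bigr => p _.
  by rewrite rmorphM /= /delta conjC_nat eq_sym.
by apply: cconv_ext => n; rewrite kform_kfun.
Qed.

Lemma dfun_eq_of_kfun c d : kfun k c = kfun k d -> dfun c = dfun d.
Proof.
move=> hcd; apply/funext => y; have [a ha] := hdelta y.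
have he x : kfun k (cdiff c d) x = 0 by rewrite cdiffE kfun_cat kfun_opp hcd subrr.
have h0 n : kf (cdiff c d) (a n) = 0.
  by rewrite (kform_conj hk (a n)) kform_kfun big1 ?rmorph0 // => p _; rewrite he mulr0.
have /(cconv_ext h0)/(cconv_uniq (cconv_cst 0))/esym/eqP := kform_delta_cvg (cdiff c d) ha.
rewrite conjC_eq0.
by rewrite cdiffE dfun_cat dfun_opp subr_eq0 => /eqP.
Qed.

Lemma dfun_eval_bound y : exists2 K, 0 <= K &
  forall e t, 0 < t -> 2 * normc (dfun e y) <= t * knorm2 e + K / t.
Proof.
have [a ha] := hdelta y.
have [K [N [K0 hK]]] := kcauchy_bounded hk (kapprox_cauchy hk ha).
exists K => // e t t0.
have hc := cconvJ (kform_delta_cvg e ha); rewrite conjCK in hc.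
rewrite -ler_pdivlMl // mulrC.
apply: (cconv_normc_le hc); exists N => n hn.
rewrite -(kform_conj hk e (a n)) (normc_kform_sym hk e (a n)) ler_pdivlMr //.
have := kform_CauchySchwarz_scaled hk e (a n) t0.
have : knorm2 (a n) / t <= K / t by rewrite ler_pM2r ?invr_gt0 // hK.
lra.
Qed.

Lemma dfun_cvg0 (e : nat -> comb) y :
  cconv (fun n => kf (e n) (e n)) 0 -> cconv (fun n => dfun (e n) y) 0.
Proof.
move=> /cconvP he; apply/cconvP => eps e0; have [K K0 hK] := dfun_eval_bound y.
have [d d0 hd] := amgm_small K0 e0.
have [N hN] := he d d0; exists N => n /hN; rewrite !subr0 -(knorm2E hk) => hn.
by apply: (hd _ _ hn) => t t0; apply: hK.
Qed.

End DeltaInH.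

Section SquareSummable.
Variables (R : realType) (V : choiceType).
Local Notation C := R[i].
Local Notation dfun := (@dfun R V).
Local Notation inl2 := (@inl2 R V).
Local Notation l2ip := (@l2ip R V).
Local Notation fsub := (@fsub R V).

Lemma sum_subset_le (T : numDomainType) (F G : seq V) (h : V -> T) :
  uniq F -> uniq G -> {subset F <= G} -> (forall x, 0 <= h x) ->
  \sum_(x <- F) h x <= \sum_(x <- G) h x.
Proof.
move=> uF uG sFG h0.
have pG : perm_eq ([seq x <- G | mem F x] ++ [seq x <- G | predC (mem F) x]) G.
  by rewrite (perm_filterC (mem F) G) perm_refl.
rewrite -[X in _ <= X](perm_big _ pG) big_cat /=.
have -> : \sum_(x <- F) h x = \sum_(x <- [seq x <- G | x \in F]) h x.
  apply: perm_big; apply: uniq_perm => //; first exact: filter_uniq.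
  move=> x; rewrite mem_filter /=; case xF: (x \in F) => //=.
  by rewrite sFG.
by rewrite lerDl sumr_ge0.
Qed.

Lemma dfun_supp c x : x \notin map fst c -> dfun c x = 0.
Proof.
move=> hx; rewrite /Defs.dfun big1_seq // => p /andP[_ pc].
by rewrite /delta; case: eqP => [e|]; [move: hx; rewrite e map_f | rewrite mulr0].
Qed.

Lemma inl2_fin (f : V -> C) (s : seq V) : (forall x, x \notin s -> f x = 0) -> inl2 f.
Proof.
move=> hf; exists (\sum_(x <- undup s) `|f x| ^+ 2) => F uF.
rewrite (bigID (mem s)) /= [X in _ + X]big1 ?addr0 => [|x /hf ->]; last first.
  by rewrite normr0 expr0n.
rewrite -big_filter; apply: sum_subset_le; rewrite ?undup_uniq ?filter_uniq //.
  by move=> x; rewrite mem_filter mem_undup => /andP[].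
by move=> x; rewrite exprn_ge0.
Qed.

Lemma inl2_dfun c : inl2 (dfun c).
Proof. by apply: (inl2_fin (s := map fst c)) => x; apply: dfun_supp. Qed.

Lemma inl2_fsub f g : inl2 f -> inl2 g -> inl2 (fsub f g).
Proof.
move=> [M1 h1] [M2 h2]; exists (2 * M1 + 2 * M2) => F uF.
apply: le_trans (_ : \sum_(x <- F) (2 * `|f x| ^+ 2 + 2 * `|g x| ^+ 2) <= _).
  apply: ler_sum => x _; rewrite /Defs.fsub !normr_normc -!rmorphXn !mulr_natl.
  rewrite -!rmorphMn -rmorphD lecR !mulr2n.
  have := normcD (f x) (- g x); rewrite normcN.
  have := normc_ge0 (f x); have := normc_ge0 (g x); have := normc_ge0 (f x - g x).
  move=> n0 n1 n2 n3; have := ler_pM n0 n0 n3 n3; have := sqr_ge0 (normc (f x) - normc (g x)); rewrite !expr2; nra.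
rewrite big_split /= -!mulr_sumr.
by apply: lerD; rewrite ler_pM2l ?ltr0Sn //; [apply: h1 | apply: h2].
Qed.

Lemma l2ip_eq f g z :
  (forall e : R, 0 < e -> exists F0 : seq V, forall F : seq V, uniq F -> {subset F0 <= F} ->
     normc (\sum_(x <- F) (f x)^* * g x - z) < e) -> l2ip f g = z.
Proof.
move=> h; rewrite /l2ip; set P := [set z | _].
have Pz : P z.
  move=> e /gtc0P [-> e0]; have [F0 hF0] := h _ e0; exists F0 => F uF sF.
  by rewrite normr_normc ltcR; apply: hF0.
have := xgetPex 0 (ex_intro _ z Pz); move: (xget 0 P) => z' Pz'.
apply/eqP; rewrite -subr_eq0; apply/eqP; apply: normc_small => e e0.
have e2 : (0 : C) < (e / 2)%:C by rewrite ltcR divr_gt0.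
have [F1 hF1] := Pz' _ e2.
have [F0 hF0] := h _ (divr_gt0 e0 (ltr0Sn _ 1)).
set F := undup (F0 ++ F1).
have uF : uniq F by apply: undup_uniq.
have s0 : {subset F0 <= F} by move=> x; rewrite mem_undup mem_cat => ->.
have s1 : {subset F1 <= F} by move=> x; rewrite mem_undup mem_cat => ->; rewrite orbT.
have a0 := hF0 F uF s0.
have := hF1 F uF s1.
rewrite normr_normc ltcR normcB => a1.
have := normc_distD z' z (\sum_(x <- F) (f x)^* * g x); lra.
Qed.

(* [l2ip h h] is the supremum of the finite partial sums of [|h x|^2]. *)
Lemma l2ip_diag h : inl2 h -> exists s : R, l2ip h h = s%:C /\
  forall y, normc (h y) ^+ 2 <= s.
Proof.
move=> [M hM].
pose sF (F : seq V) := \sum_(x <- F) normc (h x) ^+ 2.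
have sFE F : \sum_(x <- F) `|h x| ^+ 2 = (sF F)%:C.
  by rewrite rmorph_sum; apply: eq_bigr => x _; rewrite normr_normc rmorphXn.
have sF0 F : 0 <= sF F by apply: sumr_ge0 => x _; rewrite exprn_ge0 ?normc_ge0.
have bnd F : uniq F -> sF F <= complex.Re M.
  move=> uF; have := hM F uF; rewrite sFE.
  by case: M {hM} => a b; rewrite lecE /= => /andP[].
pose E := [set r : R | exists F, uniq F /\ r = sF F].
have hs : has_sup E.
  split; first by exists (sF [::]), [::].
  by exists (complex.Re M) => r [F [uF ->]]; apply: bnd.
exists (sup E); split.
  apply: l2ip_eq => e e0.
  have [r [F0 [uF0 ->]] hr] := sup_adherent e0 hs.
  exists F0 => F uF sub.
  under eq_bigr do rewrite -normCKC.
  rewrite sFE -rmorphB normc_real.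
  have l1 : sF F0 <= sF F by apply: sum_subset_le => // x; rewrite exprn_ge0 ?normc_ge0.
  have l2 : sF F <= sup E by apply: sup_upper_bound => //; exists F.
  by rewrite ltr_norml; apply/andP; split; lra.
move=> y; have : sF [:: y] <= sup E by apply: sup_upper_bound => //; exists [:: y].
by rewrite /sF big_seq1.
Qed.

Lemma l2ip_nconv_pointwise (u : nat -> V -> C) w y :
  (forall n, inl2 (fsub (u n) w)) -> nconv l2ip u w ->
  cconv (fun n => u n y) (w y).
Proof.
move=> hl /cconvP hc; apply/cconvP => e e0.
have [N hN] := hc (e ^+ 2) (exprn_gt0 _ e0).
exists N => n /hN; have [s [-> hs]] := l2ip_diag (hl n).
rewrite subr0 normc_real ltr_norml => /andP[_ hse].
have := hs y; have := normc_ge0 (u n y - w y); rewrite /Defs.fsub.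
rewrite !expr2 in hse *; nra.
Qed.

Lemma sum_dfun_conj (F : seq V) c (h : V -> C) : uniq F -> {subset map fst c <= F} ->
  \sum_(x <- F) (dfun c x)^* * h x = \sum_(q <- c) q.2^* * h q.1.
Proof.
move=> uF sF; under eq_bigr do rewrite /Defs.dfun rmorph_sum mulr_suml.
rewrite exchange_big /=; apply: eq_big_seq => q qc.
rewrite -(big_pred1_uniq h uF (sF _ (map_f _ qc))) mulr_sumr [RHS]big_mkcond.
apply: eq_bigr => x _; rewrite rmorphM /= /delta conjC_nat eq_sym.
by case: (q.1 == x); rewrite /= ?mulr1 ?mulr0 ?mul0r.
Qed.

Lemma l2ip_dfunl c h : l2ip (dfun c) h = \sum_(q <- c) q.2^* * h q.1.
Proof.
apply: l2ip_eq => e e0; exists (map fst c) => F uF sF.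
by rewrite sum_dfun_conj // subrr normc0.
Qed.

Lemma l2ip_dfunr c h : l2ip h (dfun c) = \sum_(q <- c) q.2 * (h q.1)^*.
Proof.
apply: l2ip_eq => e e0; exists (map fst c) => F uF sF.
have -> : \sum_(x <- F) (h x)^* * dfun c x = (\sum_(x <- F) (dfun c x)^* * h x)^*.
  by rewrite rmorph_sum; apply: eq_bigr => x _; rewrite rmorphM /= conjCK mulrC.
rewrite sum_dfun_conj // rmorph_sum (eq_bigr (fun q => q.2 * (h q.1)^*)) => [|q _].
  by rewrite subrr normc0.
by rewrite rmorphM /= conjCK.
Qed.

End SquareSummable.

Section Operators.
Variables (R : realType) (V : choiceType) (k : V -> V -> R[i]).
Hypotheses (hk : pos_def k) (hdelta : forall x : V, inH k (@delta R V x)).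
Local Notation C := R[i].
Local Notation comb := (seq (V * C)).
Local Notation kf := (kform k).
Local Notation dfun := (@dfun R V).
Local Notation delta := (@delta R V).
Local Notation inl2 := (@inl2 R V).
Local Notation l2ip := (@l2ip R V).
Local Notation fsub := (@fsub R V).
Local Notation span_delta := (@span_delta R V).

Lemma nconv_Hip_fsub (u : V -> C) (f g : nat -> V -> C) : inH k u ->
  (forall n, inH k (f n)) -> (forall n, inH k (g n)) ->
  nconv (Hip k) f u -> nconv (Hip k) g u ->
  cconv (fun n => Hip k (fsub (f n) (g n)) (fsub (f n) (g n))) 0.
Proof.
move=> hu hf hg hfu hgu.
have := cconvD (cconvMl 2 hfu) (cconvMl 2 hgu); rewrite mulr0 addr0.
apply: cconv_squeeze0 => n.
have -> : fsub (f n) (g n) = fsub (fsub (f n) u) (fsub (g n) u).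
  by apply/funext => y; rewrite /Defs.fsub; ring.
have hfn := inH_fsub hk (hf n) hu; have hgn := inH_fsub hk (hg n) hu.
by rewrite (Hip_ge0 hk (inH_fsub hk hfn hgn)) (Hip_fsub_le hk hfn hgn).
Qed.


(* The operator [T]: [kfun k c] goes to [dfun c]; off [span_k k] the value is irrelevant. *)
Definition kfun_to_dfun (f : V -> C) : V -> C := dfun (xget [::] [set c | f = kfun k c]).

Lemma kfun_to_dfunE c : kfun_to_dfun (kfun k c) = dfun c.
Proof.
rewrite /kfun_to_dfun; set P := [set c' | _].
by have /(dfun_eq_of_kfun hk hdelta) <- := xgetPex [::] (ex_intro P c erefl).
Qed.

Lemma kfun_lin a c d : (fun y => a * kfun k c y + kfun k d y) = kfun k (scale_comb a c ++ d).
Proof. by apply/funext => y; rewrite kfun_cat kfun_scale. Qed.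

Lemma dfun_lin a c d : (fun y => a * dfun c y + dfun d y) = dfun (scale_comb a c ++ d).
Proof. by apply/funext => y; rewrite dfun_cat dfun_scale. Qed.

Lemma linear_kfun_to_dfun : linear_on (span_k k) kfun_to_dfun.
Proof.
move=> a f g [c ->] [d ->]; rewrite kfun_lin !kfun_to_dfunE dfun_lin.
by split => //; exists (scale_comb a c ++ d).
Qed.

Lemma linear_id_span_delta : linear_on span_delta id.
Proof. by move=> a f g [c ->] [d ->]; split => //; exists (scale_comb a c ++ d); rewrite dfun_lin. Qed.

Lemma inl2_kfun_to_dfun f : span_k k f -> inl2 (kfun_to_dfun f).
Proof. by case=> c ->; rewrite kfun_to_dfunE; apply: inl2_dfun. Qed.

Lemma inH_span_delta g : span_delta g -> inH k g.
Proof. by case=> c ->; apply: inH_dfun. Qed.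

Lemma Hip_dfun_kfun a c : Hip k (dfun a) (kfun k c) = l2ip (dfun a) (dfun c).
Proof. by rewrite (Hip_kfunr hk c (inH_dfun hk hdelta a)) l2ip_dfunr. Qed.

Lemma l2ip_dfun_kfun c a : l2ip (dfun c) (dfun a) = Hip k (kfun k c) (dfun a).
Proof. by rewrite (Hip_kfunl hk c (inH_dfun hk hdelta a)) l2ip_dfunl. Qed.

Lemma id_sub_adj_kfun_to_dfun :
  sub_adj inl2 (inH k) l2ip (Hip k) span_delta id (span_k k) kfun_to_dfun.
Proof.
move=> f [c ->]; split; rewrite ?kfun_to_dfunE.
- exact: inH_kfun.
- exact: inl2_dfun.
- by move=> g [a ->]; rewrite Hip_dfun_kfun.
Qed.

Lemma kfun_to_dfun_sub_adj_id :
  sub_adj (inH k) inl2 (Hip k) l2ip (span_k k) kfun_to_dfun span_delta id.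
Proof.
move=> g [a ->]; split.
- exact: inl2_dfun.
- exact: inH_dfun.
- by move=> f [c ->]; rewrite kfun_to_dfunE l2ip_dfun_kfun.
Qed.


Lemma fsub_kfun c d : fsub (kfun k c) (kfun k d) = kfun k (cdiff c d).
Proof. by apply/funext => y; rewrite cdiffE kfun_cat kfun_opp. Qed.

Lemma span_k_seq (f : nat -> V -> C) : (forall n, span_k k (f n)) ->
  exists c : nat -> comb, forall n, f n = kfun k (c n).
Proof.
move=> hf; have /choice [c hc] : forall n, exists c, f n = kfun k c.
  by move=> n; case: (hf n) => c ->; exists c.
by exists c.
Qed.

Lemma graph_closure_kfun_to_dfun u w : graph_closure (inH k) inl2 (Hip k) l2ip
    (span_k k) kfun_to_dfun u w ->
  exists c : nat -> comb, [/\ forall n, inH k (kfun k (c n)),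
    nconv (Hip k) (fun n => kfun k (c n)) u &
    forall y, cconv (fun n => dfun (c n) y) (w y)].
Proof.
move=> [hu hw [f [hf hfu hfw]]]; have [c hc] := span_k_seq hf.
exists c; split => [n||y]; first exact: inH_kfun.
  by apply: cconv_ext hfu => n; rewrite hc.
have hl n : inl2 (fsub (kfun_to_dfun (f n)) w).
  by rewrite hc kfun_to_dfunE; apply: inl2_fsub => //; apply: inl2_dfun.
by apply: cconv_ext (l2ip_nconv_pointwise y hl hfw) => n; rewrite hc kfun_to_dfunE.
Qed.

(* [dfun c y] is the inner product of [delta y] with [kfun k c], so the limit
   of [T f_n] at [y] only depends on the limit of [f_n] in [H]. *)
Lemma closable_kfun_to_dfun : closable (inH k) inl2 (Hip k) l2ip (span_k k) kfun_to_dfun.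
Proof.
move=> u w1 w2 h1 h2; have [hu _ _] := h1.
have [c [hc hcu hcw]] := graph_closure_kfun_to_dfun h1.
have [d [hd hdu hdw]] := graph_closure_kfun_to_dfun h2.
have hcd : cconv (fun n => kf (cdiff (c n) (d n)) (cdiff (c n) (d n))) 0.
  apply: cconv_ext (nconv_Hip_fsub hu hc hd hcu hdu) => n.
  by rewrite fsub_kfun (Hip_kfun hk).
apply/funext => y; apply/eqP; rewrite -subr_eq0; apply/eqP.
apply: (cconv_uniq (cconvB (hcw y) (hdw y))).
by apply: cconv_ext (dfun_cvg0 hk hdelta y hcd) => n; rewrite cdiffE dfun_cat dfun_opp.
Qed.

Lemma span_delta_pointwise (f : nat -> V -> C) u w y : inl2 u -> inH k w ->
  (forall n, span_delta (f n)) -> nconv l2ip f u -> nconv (Hip k) f w -> u y = w y.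
Proof.
move=> hu hw hf hfu hfw; apply: (cconv_uniq (u := fun n => f n y)).
  apply: l2ip_nconv_pointwise hfu => n.
  by case: (hf n) => c ->; apply: inl2_fsub => //; apply: inl2_dfun.
apply: Hip_nconv_pointwise hfw => //= n.
by case: (hf n) => c ->; apply: inH_fsub => //; apply: inH_dfun.
Qed.

Lemma closable_id_span_delta : closable inl2 (inH k) l2ip (Hip k) span_delta id.
Proof.
move=> u w1 w2 [hu hw1 [f [hf hfu hfw]]] [_ hw2 [g [hg hgu hgw]]].
apply/funext => y.
by rewrite -(span_delta_pointwise y hu hw1 hf hfu hfw) (span_delta_pointwise y hu hw2 hg hgu hgw).
Qed.

End Operators.

Unset Implicit Arguments.

Theorem corollary2p7 (R : realType) (V : choiceType)
    (hV : ([set: V] #= [set: nat])%card)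
    (k : V -> V -> R[i]) (hk : pos_def k)
    (hdelta : forall x : V, inH k (@delta R V x)) :
  exists T S : (V -> R[i]) -> (V -> R[i]),
    [/\ linear_on (span_k k) T /\ (forall f, span_k k f -> inl2 (T f)),
        linear_on (@span_delta R V) S /\ (forall g, span_delta g -> inH k (S g)),
        closable (inH k) (@inl2 R V) (Hip k) (@l2ip R V) (span_k k) T
          /\ closable (@inl2 R V) (inH k) (@l2ip R V) (Hip k) (@span_delta R V) S,
        sub_adj (@inl2 R V) (inH k) (@l2ip R V) (Hip k) (@span_delta R V) S (span_k k) T
          /\ sub_adj (inH k) (@inl2 R V) (Hip k) (@l2ip R V) (span_k k) T (@span_delta R V) S
      & forall x : V, T (k^~ x) = @delta R V x /\ S (@delta R V x) = @delta R V x].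
Proof.
exists (kfun_to_dfun k), id; split.
- split; [exact: linear_kfun_to_dfun | exact: inl2_kfun_to_dfun].
- split; [exact: linear_id_span_delta | exact: inH_span_delta].
- split; [exact: closable_kfun_to_dfun | exact: closable_id_span_delta].
- split; [exact: id_sub_adj_kfun_to_dfun | exact: kfun_to_dfun_sub_adj_id].
- by move=> x; rewrite -kfun1 kfun_to_dfunE ?dfun1.
Qed.
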